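(* Every UA-theory over $\mathbb{I}$ gives rise to an fb-monad on $[\mathbb{I},\mathbf{Set}]$: namely, for a theory $\langle |\mathbb{I}|,\mathrm{Op}_{[\mathbb{I},\mathbf{Set}]}\uplus\mathrm{Op},E_{[\mathbb{I},\mathbf{Set}]}\uplus E\rangle$, the forgetful functor from its category of models to $[\mathbb{I},\mathbf{Set}]$ has a left adjoint and the induced monad on $[\mathbb{I},\mathbf{Set}]$ is finitary based.
   Context: $\mathcal{N}$ is a countable set of names; $\mathbb{I}$ is the category of finite subsets of $\mathcal{N}$ and injective maps, $|\mathbb{I}|$ its underlying discrete category. $\mathrm{Op}_{[\mathbb{I},\mathbf{Set}]}$ is the many-sorted signature with sorts the finite subsets of $\mathcal{N}$ and operation symbols $(b/a)_S:S\cup\{a\}\to S\cup\{b\}$ ($a\neq b$, $a,b\notin S$) and $w_{S,a}:S\to S\cup\{a\}$ ($a\notin S$); $E_{[\mathbb{I},\mathbf{Set}]}$ is a set of equations over it whose models are exactly the presheaves $A\in[\mathbb{I},\mathbf{Set}]$ (carrier of sort $S$ being $A(S)$, $w_{S,a}$ interpreted as $A$ of the inclusion, $(b/a)_S$ as $A$ of the renaming $a\mapsto b$ fixing $S$). A UA-theory over $\mathbb{I}$ is a many-sorted equational theory $\langle |\mathbb{I}|,\mathrm{Op}_{[\mathbb{I},\mathbf{Set}]}\uplus\mathrm{Op},E_{[\mathbb{I},\mathbf{Set}]}\uplus E\rangle$ with $\mathrm{Op}$ an additional set of finitary many-sorted operation symbols and $E$ a set of equations. An fb-monad on $[\mathbb{I},\mathbf{Set}]$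 is a monad whose underlying functor preserves filtered colimits and is based, i.e. preserves the canonical coequalizers $F^{\mathbb{T}}U^{\mathbb{T}}F^{\mathbb{T}}U^{\mathbb{T}}A\rightrightarrows F^{\mathbb{T}}U^{\mathbb{T}}A\to A$ for the adjunction $F^{\mathbb{T}}\dashv U^{\mathbb{T}}$ where $U^{\mathbb{T}}:[\mathbb{I},\mathbf{Set}]\to[|\mathbb{I}|,\mathbf{Set}]$ is restriction. *)

From HB Require Import structures.
From mathcomp Require Import all_boot finmap.
From Stdlib Require Import FunctionalExtensionality ProofIrrelevance.

Set Implicit Arguments.
Unset Strict Implicit.
Unset Printing Implicit Defensive.

Local Open Scope fset_scope.

(* The category I: finite subsets of the countable set of names N = nat,
   and injective maps between them.                                    *)

Notation fsetN := {fset nat}.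

Definition elt (S : fsetN) := {x : nat | x \in S}.

Record Inj (S T : fsetN) := MkInj {
  inj_fun :> elt S -> elt T;
  inj_injective : injective inj_fun }.

Definition iid (S : fsetN) : Inj S S := @MkInj S S id (fun x y h => h).

Definition icomp (S T U : fsetN) (g : Inj T U) (f : Inj S T) : Inj S U :=
  @MkInj S U (g \o f)
    (fun x y e => @inj_injective _ _ f _ _ (@inj_injective _ _ g _ _ e)).

Lemma Inj_ext (S T : fsetN) (f g : Inj S T) : f =1 g -> f = g.
Proof.
case: f g => f fi [g gi] /= e.
have efg : f = g by apply: functional_extensionality.
subst g; congr MkInj; apply: proof_irrelevance.
Qed.

Definition ren_nat (a b x : nat) := if x == a then b else x.

Lemma ren_mem (S : fsetN) (a b x : nat) :
  x \in S `|` [fset a] -> ren_nat a b x \in S `|` [fset b].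
Proof.
rewrite /ren_nat !in_fsetU !in_fset1.
case: (x =P a) => [_ _|xa]; first by rewrite eqxx orbT.
by case/orP => [->//|/eqP]; move: xa.
Qed.

Definition ren_fun (S : fsetN) (a b : nat) (x : elt (S `|` [fset a])) :
  elt (S `|` [fset b]) := exist _ (ren_nat a b (val x)) (ren_mem b (valP x)).

Lemma ren_fun_inj (S : fsetN) (a b : nat) :
  b \notin S -> injective (@ren_fun S a b).
Proof.
move=> hb [x hx] [y hy] /(congr1 val) /=; rewrite /ren_nat => e.
apply: val_inj => /=.
move: hx hy e; rewrite !in_fsetU !in_fset1.
case: (x =P a) => [->|xa]; case: (y =P a) => [->|ya] //=.
- by rewrite orbF => _ hy e; subst y; rewrite hy in hb.
- by rewrite orbF => hx _ e; subst x; rewrite hx in hb.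
Qed.

(* (b/a)_S is interpreted by A applied to this injection *)
Definition ren_inj (S : fsetN) (a b : nat) (hb : b \notin S) :
  Inj (S `|` [fset a]) (S `|` [fset b]) :=
  @MkInj _ _ (@ren_fun S a b) (@ren_fun_inj S a b hb).

Lemma wk_mem (S : fsetN) (a x : nat) : x \in S -> x \in S `|` [fset a].
Proof. by rewrite in_fsetU => ->. Qed.

Definition wk_fun (S : fsetN) (a : nat) (x : elt S) : elt (S `|` [fset a]) :=
  exist _ (val x) (wk_mem a (valP x)).

Lemma wk_fun_inj (S : fsetN) (a : nat) : injective (@wk_fun S a).
Proof. by move=> x y /(congr1 val) /= /val_inj. Qed.

(* w_{S,a} is interpreted by A applied to the inclusion S -> S ∪ {a} *)
Definition wk_inj (S : fsetN) (a : nat) : Inj S (S `|` [fset a]) :=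
  @MkInj _ _ (@wk_fun S a) (@wk_fun_inj S a).

(* The functor category [I, Set]                                       *)

Record presheaf := {
  pob :> fsetN -> Type;
  pact : forall S T : fsetN, Inj S T -> pob S -> pob T;
  pact_id : forall S (x : pob S), pact (iid S) x = x;
  pact_comp : forall S T U (f : Inj S T) (g : Inj T U) (x : pob S),
      pact (icomp g f) x = pact g (pact f x) }.

Arguments pact p {S T} f x.

Record nt (A B : presheaf) := {
  ntf : forall S : fsetN, A S -> B S;
  ntnat : forall S T (f : Inj S T) (x : A S),
      ntf (pact A f x) = pact B f (ntf x) }.

Arguments ntf {A B} n S x.

Definition nt_eq (A B : presheaf) (f g : nt A B) : Prop :=
  forall S (x : A S), @ntf A B f S x = @ntf A B g S x.

Definition nt_id (A : presheaf) : nt A A :=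
  @Build_nt A A (fun S x => x) (fun S T f x => erefl).

Lemma nt_comp_nat (A B C : presheaf) (g : nt B C) (f : nt A B) S T
  (h : Inj S T) (x : A S) :
  @ntf B C g T (@ntf A B f T (pact A h x)) = pact C h (@ntf B C g S (@ntf A B f S x)).
Proof. by rewrite ntnat ntnat. Qed.

Definition nt_comp (A B C : presheaf) (g : nt B C) (f : nt A B) : nt A C :=
  @Build_nt A C (fun S x => @ntf B C g S (@ntf A B f S x)) (nt_comp_nat g f).

(* UA-theories over I                                                   *)

(* the additional signature Op: finitary many-sorted operation symbols
   o : s_1 ... s_n -> s, with sorts finite subsets of N *)
Record signature := {
  sop : Type;
  sar : sop -> seq fsetN;
  stg : sop -> fsetN }.

Fixpoint hprod (A : fsetN -> Type) (l : seq fsetN) : Type :=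
  match l with
  | [::] => unit
  | s :: l' => (A s * hprod A l')%type
  end.

Fixpoint hmap (A B : fsetN -> Type) (f : forall s, A s -> B s) (l : seq fsetN) :
  hprod A l -> hprod B l :=
  match l return hprod A l -> hprod B l with
  | [::] => fun _ => tt
  | s :: l' => fun p => (f s p.1, hmap f p.2)
  end.

(* Many-sorted terms over the signature Op_[I,Set] ⊎ Op, in a finite
   sorted variable context G (variable i has sort nth fset0 G i).
   tren S a b  is the operation symbol (b/a)_S (a <> b, a,b ∉ S),
   twk S a     is the operation symbol w_{S,a}  (a ∉ S),
   top o       is an additional operation symbol o ∈ Op.              *)
Inductive term (Sg : signature) (G : seq fsetN) : fsetN -> Type :=
| tvar (i : 'I_(size G)) : term Sg G (nth fset0 G i)
| tren (S : fsetN) (a b : nat) :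
    a != b -> a \notin S -> b \notin S ->
    term Sg G (S `|` [fset a]) -> term Sg G (S `|` [fset b])
| twk (S : fsetN) (a : nat) :
    a \notin S -> term Sg G S -> term Sg G (S `|` [fset a])
| top (o : sop Sg) : terms Sg G (sar o) -> term Sg G (stg o)
with terms (Sg : signature) (G : seq fsetN) : seq fsetN -> Type :=
| tnil : terms Sg G [::]
| tcons (s : fsetN) (l : seq fsetN) :
    term Sg G s -> terms Sg G l -> terms Sg G (s :: l).

Record equation (Sg : signature) := {
  eq_ctx : seq fsetN;
  eq_sort : fsetN;
  eq_lhs : term Sg eq_ctx eq_sort;
  eq_rhs : term Sg eq_ctx eq_sort }.

(* A UA-theory < |I|, Op_[I,Set] ⊎ Op, E_[I,Set] ⊎ E >, given by the
   additional operation symbols Op and the additional equations E.    *)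
Record ua_theory := {
  th_sig : signature;
  th_eqs : equation th_sig -> Prop }.

Fixpoint eval (Sg : signature) (A : presheaf)
  (mop : forall o : sop Sg, hprod A (sar o) -> A (stg o))
  (G : seq fsetN) (env : forall i : 'I_(size G), A (nth fset0 G i))
  (s : fsetN) (t : term Sg G s) {struct t} : A s :=
  match t in term _ _ s return A s with
  | tvar i => env i
  | tren S0 a b _ _ hb t' => pact A (ren_inj a hb) (eval mop env t')
  | twk S0 a _ t' => pact A (wk_inj S0 a) (eval mop env t')
  | top o ts => mop o (evals mop env ts)
  end
with evals (Sg : signature) (A : presheaf)
  (mop : forall o : sop Sg, hprod A (sar o) -> A (stg o))
  (G : seq fsetN) (env : forall i : 'I_(size G), A (nth fset0 G i))
  (l : seq fsetN) (ts : terms Sg G l) {struct ts} : hprod A l :=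
  match ts in terms _ _ l return hprod A l with
  | tnil => tt
  | tcons s l t ts' => (eval mop env t, evals mop env ts')
  end.

(* Models of the UA-theory: models of E_[I,Set] are exactly presheaves,
   so a model is a presheaf together with an interpretation of Op
   satisfying every equation of E. *)
Record model (Th : ua_theory) := {
  mcar :> presheaf;
  mop : forall o : sop (th_sig Th), hprod mcar (sar o) -> mcar (stg o);
  msat : forall e : equation (th_sig Th), th_eqs e ->
      forall env : (forall i : 'I_(size (eq_ctx e)), mcar (nth fset0 (eq_ctx e) i)),
      eval mop env (eq_lhs e) = eval mop env (eq_rhs e) }.

Arguments mop {Th} m o args.

Record mhom (Th : ua_theory) (M N : model Th) := {
  mh_nt : nt M N;
  mh_op : forall (o : sop (th_sig Th)) (args : hprod M (sar o)),
      @ntf M N mh_nt (stg o) (mop M o args) = mop N o (hmap (@ntf M N mh_nt) args) }.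

(* A left adjoint to the forgetful functor Mod(Th) -> [I,Set],
   given (equivalently) by a universal arrow X -> U(F X) for each X. *)
Record left_adjoint (Th : ua_theory) := {
  fr_ob : presheaf -> model Th;
  fr_unit : forall X : presheaf, nt X (fr_ob X);
  fr_ext : forall (X : presheaf) (M : model Th), nt X M -> mhom (fr_ob X) M;
  fr_ext_comm : forall (X : presheaf) (M : model Th) (f : nt X M),
      nt_eq (nt_comp (mh_nt (fr_ext f)) (fr_unit X)) f;
  fr_ext_unique : forall (X : presheaf) (M : model Th) (f : nt X M)
      (g : mhom (fr_ob X) M),
      nt_eq (nt_comp (mh_nt g) (fr_unit X)) f -> nt_eq (mh_nt g) (mh_nt (fr_ext f)) }.

Arguments fr_ob {Th} l X.
Arguments fr_unit {Th} l X.
Arguments fr_ext {Th} l {X M} f.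

Definition Tob (Th : ua_theory) (L : left_adjoint Th) (X : presheaf) : presheaf :=
  mcar (fr_ob L X).

Definition Tmap (Th : ua_theory) (L : left_adjoint Th) (X Y : presheaf)
  (h : nt X Y) : nt (Tob L X) (Tob L Y) :=
  mh_nt (fr_ext L (nt_comp (fr_unit L Y) h)).

(* Filtered colimits in [I,Set]                                        *)

Record smallcat := {
  cob : Type;
  chom : cob -> cob -> Type;
  cid : forall i, chom i i;
  ccomp : forall i j k, chom j k -> chom i j -> chom i k;
  ccomp_idl : forall i j (u : chom i j), ccomp (cid j) u = u;
  ccomp_idr : forall i j (u : chom i j), ccomp u (cid i) = u;
  ccomp_assoc : forall i j k l (u : chom i j) (v : chom j k) (w : chom k l),
      ccomp w (ccomp v u) = ccomp (ccomp w v) u }.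

Definition filtered (J : smallcat) : Prop :=
  inhabited (cob J) /\
  (forall i j : cob J, exists k, inhabited (chom i k) /\ inhabited (chom j k)) /\
  (forall (i j : cob J) (u v : chom i j),
      exists k (w : chom j k), ccomp w u = ccomp w v).

Record diagram (J : smallcat) := {
  dob : cob J -> presheaf;
  dmap : forall i j : cob J, chom i j -> nt (dob i) (dob j) }.

Definition functorial (J : smallcat) (D : diagram J) : Prop :=
  (forall i, nt_eq (dmap D (cid i)) (nt_id (dob D i))) /\
  (forall i j k (u : chom i j) (v : chom j k),
      nt_eq (dmap D (ccomp v u)) (nt_comp (dmap D v) (dmap D u))).

Definition is_cocone (J : smallcat) (D : diagram J) (L : presheaf)
  (c : forall i, nt (dob D i) L) : Prop :=
  forall i j (u : chom i j), nt_eq (nt_comp (c j) (dmap D u)) (c i).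

Definition is_colimit (J : smallcat) (D : diagram J) (L : presheaf)
  (c : forall i, nt (dob D i) L) : Prop :=
  is_cocone c /\
  forall (L' : presheaf) (c' : forall i, nt (dob D i) L'),
    is_cocone c' ->
    exists u : nt L L',
      (forall i, nt_eq (nt_comp u (c i)) (c' i)) /\
      (forall u' : nt L L', (forall i, nt_eq (nt_comp u' (c i)) (c' i)) ->
         nt_eq u' u).

Arguments is_colimit {J} D L c.

Definition Tdiag (Th : ua_theory) (L : left_adjoint Th) (J : smallcat)
  (D : diagram J) : diagram J :=
  @Build_diagram J (fun i => Tob L (dob D i)) (fun i j u => Tmap L (dmap D u)).

Definition finitary (Th : ua_theory) (L : left_adjoint Th) : Prop :=
  forall (J : smallcat) (D : diagram J) (C : presheaf)
    (c : forall i, nt (dob D i) C),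
    filtered J -> functorial D -> is_colimit D C c ->
    is_colimit (Tdiag L D) (Tob L C) (fun i => Tmap L (c i)).

(* Based: preservation of the canonical coequalizers
   F U F U A ==> F U A --> A  for  F ⊣ U : [I,Set] -> [|I|,Set],
   U restriction, F its left adjoint (left Kan extension):
   (F Y)(S) = Σ_{S'} I(S',S) × Y(S').                                 *)

Definition FU_ob (A : fsetN -> Type) (S : fsetN) : Type :=
  {S' : fsetN & (Inj S' S * A S')%type}.

Definition FU_act (A : fsetN -> Type) (S T : fsetN) (f : Inj S T)
  (x : FU_ob A S) : FU_ob A T :=
  existT _ (projT1 x) (icomp f (projT2 x).1, (projT2 x).2).

Lemma FU_act_id (A : fsetN -> Type) S (x : FU_ob A S) : FU_act (iid S) x = x.
Proof.
case: x => S' [g y]; rewrite /FU_act /=.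
by have -> : icomp (iid S) g = g by apply: Inj_ext.
Qed.

Lemma FU_act_comp (A : fsetN -> Type) S T U (f : Inj S T) (g : Inj T U)
  (x : FU_ob A S) : FU_act (icomp g f) x = FU_act g (FU_act f x).
Proof.
case: x => S' [h y]; rewrite /FU_act /=.
by have -> : icomp (icomp g f) h = icomp g (icomp f h) by apply: Inj_ext.
Qed.

Definition FU (A : presheaf) : presheaf :=
  @Build_presheaf (FU_ob A) (@FU_act A) (@FU_act_id A) (@FU_act_comp A).

Definition eps_fun (A : presheaf) (S : fsetN) (x : FU A S) : A S :=
  pact A (projT2 x).1 (projT2 x).2.

Lemma eps_nat (A : presheaf) S T (f : Inj S T) (x : FU A S) :
  eps_fun (pact (FU A) f x) = pact A f (eps_fun x).
Proof. by case: x => S' [g y]; rewrite /eps_fun /= pact_comp. Qed.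

Definition eps (A : presheaf) : nt (FU A) A := @Build_nt (FU A) A (@eps_fun A) (@eps_nat A).

Definition FUeps_fun (A : presheaf) (S : fsetN) (x : FU (FU A) S) : FU A S :=
  existT _ (projT1 x) ((projT2 x).1, eps_fun (projT2 x).2).

Lemma FUeps_nat (A : presheaf) S T (f : Inj S T) (x : FU (FU A) S) :
  FUeps_fun (pact (FU (FU A)) f x) = pact (FU A) f (FUeps_fun x).
Proof. by case: x. Qed.

Definition FUeps (A : presheaf) : nt (FU (FU A)) (FU A) :=
  @Build_nt (FU (FU A)) (FU A) (@FUeps_fun A) (@FUeps_nat A).

Definition is_coequalizer (B C E : presheaf) (p q : nt B C) (e : nt C E) : Prop :=
  nt_eq (nt_comp e p) (nt_comp e q) /\
  forall (E' : presheaf) (e' : nt C E'),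
    nt_eq (nt_comp e' p) (nt_comp e' q) ->
    exists u : nt E E',
      nt_eq (nt_comp u e) e' /\
      (forall u' : nt E E', nt_eq (nt_comp u' e) e' -> nt_eq u' u).

Definition based (Th : ua_theory) (L : left_adjoint Th) : Prop :=
  forall A : presheaf,
    is_coequalizer (Tmap L (FUeps A)) (Tmap L (eps (FU A))) (Tmap L (eps A)).

From mathcomp Require Import all_boot finmap.
From Stdlib Require Import FunctionalExtensionality ProofIrrelevance PropExtensionality IndefiniteDescription Relations.

Set Implicit Arguments.
Unset Strict Implicit.
Unset Printing Implicit Defensive.

(* The left adjoint is the term model.  For an arbitrary left adjoint, the
   monad T preserves filtered colimits because filtered colimits of models
   are computed on underlying presheaves (operations being finitary), and it
   is based because the canonical coequalizers are coequalizers of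
   reflexive pairs, which T preserves. *)

(** * Quotients *)

Section PropQuotient.
Variables (X : Type) (R : X -> X -> Prop).

Definition quo := {P : X -> Prop | exists x, P = R x}.

Definition qclass (x : X) : quo := exist _ (R x) (ex_intro _ x erefl).

Definition qrepr (q : quo) : X :=
  proj1_sig (constructive_indefinite_description _ (proj2_sig q)).

Lemma qreprK (q : quo) : qclass (qrepr q) = q.
Proof.
rewrite /qrepr; case: constructive_indefinite_description => x /= e.
by apply: eq_sig_hprop => [? ? ?|/=]; [exact: proof_irrelevance | rewrite e].
Qed.

Hypothesis Rr : forall x, R x x.
Hypothesis Rs : forall x y, R x y -> R y x.
Hypothesis Rt : forall x y z, R x y -> R y z -> R x z.

Lemma qclass_eq x y : qclass x = qclass y -> R x y.
Proof. by move=> /(congr1 (@proj1_sig _ _)) /= ->. Qed.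

Lemma eq_qclass x y : R x y -> qclass x = qclass y.
Proof.
move=> Rxy; apply: eq_sig_hprop => [? ? ?|/=]; first exact: proof_irrelevance.
by apply: functional_extensionality => z; apply: propositional_extensionality; split; eauto.
Qed.

Lemma qclassK x : R (qrepr (qclass x)) x.
Proof. by apply: qclass_eq; rewrite qreprK. Qed.

End PropQuotient.

(* A family with an action of injections that is functorial only up to a
   compatible equivalence becomes a presheaf after quotienting. *)
Section QuotientPresheaf.
Variables (Y : fsetN -> Type) (act : forall S T, Inj S T -> Y S -> Y T).
Variable R : forall S, Y S -> Y S -> Prop.
Hypothesis Rr : forall S (x : Y S), R x x.
Hypothesis Rs : forall S (x y : Y S), R x y -> R y x.
Hypothesis Rt : forall S (x y z : Y S), R x y -> R y z -> R x z.
Hypothesis R_act : forall S T (f : Inj S T) x y, R x y -> R (act f x) (act f y).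
Hypothesis act_id : forall S (x : Y S), R (act (iid S) x) x.
Hypothesis act_comp : forall S T U (f : Inj S T) (g : Inj T U) x,
  R (act (icomp g f) x) (act g (act f x)).

Definition qpact S T (f : Inj S T) (q : quo (@R S)) : quo (@R T) :=
  qclass _ (act f (qrepr q)).

Lemma qpact_id S (q : quo (@R S)) : qpact (iid S) q = q.
Proof. by rewrite /qpact -{2}(qreprK q); apply: (eq_qclass (@Rs S) (@Rt S)). Qed.

Lemma qpact_comp S T U (f : Inj S T) (g : Inj T U) (q : quo (@R S)) :
  qpact (icomp g f) q = qpact g (qpact f q).
Proof.
apply: (eq_qclass (@Rs U) (@Rt U)); apply: Rt (act_comp f g _) _.
by apply/R_act/Rs; exact: qclassK.
Qed.

Definition quo_presheaf : presheaf := Build_presheaf qpact_id qpact_comp.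

Lemma quo_presheaf_act S T (f : Inj S T) (y : Y S) :
  pact quo_presheaf f (qclass _ y) = qclass _ (act f y).
Proof. by apply: (eq_qclass (@Rs T) (@Rt T)); apply: R_act; exact: qclassK. Qed.

End QuotientPresheaf.

(** * Models and the monad of an adjunction *)

Lemma hmap_comp (A B C : fsetN -> Type) (f : forall s, B s -> C s)
  (g : forall s, A s -> B s) l (x : hprod A l) :
  hmap f (hmap g x) = hmap (fun s y => f s (g s y)) x.
Proof. by elim: l x => [|s l IH] x //=; rewrite IH. Qed.

Lemma eq_hmap (A B : fsetN -> Type) (f g : forall s, A s -> B s) l (x : hprod A l) :
  (forall s y, f s y = g s y) -> hmap f x = hmap g x.
Proof. by move=> efg; elim: l x => [|s l IH] x //=; rewrite IH efg. Qed.

Lemma hmap_id (A : fsetN -> Type) l (x : hprod A l) : hmap (fun s y => y) x = x.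
Proof. by elim: l x => [|s l IH] [] //= a r; rewrite IH. Qed.

Fixpoint hrel (A : fsetN -> Type) (R : forall S, A S -> A S -> Prop) l :
  hprod A l -> hprod A l -> Prop :=
  match l return hprod A l -> hprod A l -> Prop with
  | [::] => fun _ _ => True
  | s :: l' => fun x y => R s x.1 y.1 /\ hrel R x.2 y.2
  end.

Lemma clos_rst_map (T1 T2 : Type) (R1 : relation T1) (R2 : relation T2) (F : T1 -> T2) :
  (forall x y, R1 x y -> clos_refl_sym_trans T2 R2 (F x) (F y)) ->
  forall x y, clos_refl_sym_trans T1 R1 x y -> clos_refl_sym_trans T2 R2 (F x) (F y).
Proof.
move=> hF x y; elim=> [a b /hF //|a|a b _ IH|a b c _ IH1 _ IH2].
- exact: rst_refl.
- exact: rst_sym.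
- exact: rst_trans IH2.
Qed.

Lemma clos_rst_eq (T1 T2 : Type) (R : relation T1) (F : T1 -> T2) :
  (forall x y, R x y -> F x = F y) ->
  forall x y, clos_refl_sym_trans T1 R x y -> F x = F y.
Proof. by move=> hF x y; elim=> [a b /hF //|a //|a b _ ->//|a b c _ -> _ ->]. Qed.

Scheme term_mind := Induction for term Sort Prop
with terms_mind := Induction for terms Sort Prop.

Lemma eval_hom (Sg : signature) (A B : presheaf) mA mB (h : forall S, A S -> B S)
  (h_nat : forall S T (f : Inj S T) x, h T (pact A f x) = pact B f (h S x))
  (h_op : forall o args, h _ (mA o args) = mB o (hmap h args))
  G (env : forall i : 'I_(size G), A (nth fset0 G i)) s (t : term Sg G s) :
  h s (eval mA env t) = eval mB (fun i => h _ (env i)) t.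
Proof.
move: s t; apply: (term_mind
  (P := fun s t => h s (eval mA env t) = eval mB (fun i => h _ (env i)) t)
  (P0 := fun l ts => hmap h (evals mA env ts) = evals mB (fun i => h _ (env i)) ts)).
- by [].
- by move=> S a b _ _ hb t IH /=; rewrite h_nat IH.
- by move=> S a _ t IH /=; rewrite h_nat IH.
- by move=> o ts IH /=; rewrite h_op IH.
- by [].
- by move=> s l t IH ts IHs /=; rewrite IH IHs.
Qed.

Lemma eval_sat_hom (Th : ua_theory) (M : model Th) (B : presheaf) mB
  (h : forall S, M S -> B S)
  (h_nat : forall S T (f : Inj S T) x, h T (pact M f x) = pact B f (h S x))
  (h_op : forall o args, h _ (mop M o args) = mB o (hmap h args))
  (e : equation (th_sig Th)) (he : th_eqs e) env :
  eval mB (fun i => h _ (env i)) (eq_lhs e) = eval mB (fun i => h _ (env i)) (eq_rhs e).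
Proof. by rewrite -!(eval_hom h_nat h_op) msat. Qed.

Section ModelHoms.
Variable Th : ua_theory.

Definition mhom_comp (M N P : model Th) (g : mhom N P) (f : mhom M N) : mhom M P.
Proof.
refine (@Build_mhom Th M P (nt_comp (mh_nt g) (mh_nt f)) _).
by move=> o args /=; rewrite !mh_op hmap_comp.
Defined.

Definition mhom_id (M : model Th) : mhom M M.
Proof.
refine (@Build_mhom Th M M (nt_id M) _).
by move=> o args /=; rewrite hmap_id.
Defined.

End ModelHoms.

Section MonadOfAdjunction.
Variables (Th : ua_theory) (L : left_adjoint Th).

Lemma fr_extE (X : presheaf) (M : model Th) (f : nt X M) S (x : X S) :
  ntf (mh_nt (fr_ext L f)) S (ntf (fr_unit L X) S x) = ntf f S x.
Proof. exact: (fr_ext_comm L f x). Qed.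

Lemma free_mhom_eq (X : presheaf) (M : model Th) (g1 g2 : mhom (fr_ob L X) M) :
  nt_eq (nt_comp (mh_nt g1) (fr_unit L X)) (nt_comp (mh_nt g2) (fr_unit L X)) ->
  nt_eq (mh_nt g1) (mh_nt g2).
Proof.
move=> g12 S x.
have -> := fr_ext_unique (f := nt_comp (mh_nt g1) (fr_unit L X)) (g := g1) (fun _ _ => erefl).
by have -> := fr_ext_unique (g := g2) (fun S y => esym (g12 S y)).
Qed.

Definition Tmhom (X Y : presheaf) (h : nt X Y) : mhom (fr_ob L X) (fr_ob L Y) :=
  fr_ext L (nt_comp (fr_unit L Y) h).

Lemma Tmap_unit (X Y : presheaf) (h : nt X Y) S (x : X S) :
  ntf (Tmap L h) S (ntf (fr_unit L X) S x) = ntf (fr_unit L Y) S (ntf h S x).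
Proof. exact: fr_extE. Qed.

Lemma Tmap_op (X Y : presheaf) (h : nt X Y) o args :
  ntf (Tmap L h) _ (mop (fr_ob L X) o args) =
  mop (fr_ob L Y) o (hmap (ntf (Tmap L h)) args).
Proof. exact: (mh_op (Tmhom h) args). Qed.

Lemma Tmap_comp (X Y Z : presheaf) (g : nt Y Z) (f : nt X Y) S z :
  ntf (Tmap L (nt_comp g f)) S z = ntf (Tmap L g) S (ntf (Tmap L f) S z).
Proof.
apply: (free_mhom_eq (g1 := Tmhom (nt_comp g f)) (g2 := mhom_comp (Tmhom g) (Tmhom f))).
by move=> T x /=; rewrite -!/(Tmap L _) !Tmap_unit.
Qed.

Lemma Tmap_ext (X Y : presheaf) (f g : nt X Y) :
  nt_eq f g -> nt_eq (Tmap L f) (Tmap L g).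
Proof.
move=> efg; apply: (free_mhom_eq (g1 := Tmhom f) (g2 := Tmhom g)) => S x /=.
by rewrite -!/(Tmap L _) !Tmap_unit efg.
Qed.

Lemma Tmap_id (X : presheaf) S z : ntf (Tmap L (nt_id X)) S z = z.
Proof.
apply: (free_mhom_eq (g1 := Tmhom (nt_id X)) (g2 := mhom_id _)) => T x /=.
by rewrite -!/(Tmap L _) Tmap_unit.
Qed.

End MonadOfAdjunction.

(** * The free model *)

Section FreeModel.
Variables (Th : ua_theory) (X : presheaf).
Notation Sg := (th_sig Th).

(* Raw terms: the action of every injection is a term former, and the
   functor laws hold only up to the congruence [tm_eqv] below. *)
Inductive tm : fsetN -> Type :=
| tm_var S : X S -> tm S
| tm_act S T : Inj S T -> tm S -> tm T
| tm_op (o : sop Sg) : tms (sar o) -> tm (stg o)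
with tms : seq fsetN -> Type :=
| tms_nil : tms [::]
| tms_cons s l : tm s -> tms l -> tms (s :: l).

Scheme tm_mind := Induction for tm Sort Prop
with tms_mind := Induction for tms Sort Prop.

Fixpoint tm_of_term G (env : forall i : 'I_(size G), tm (nth fset0 G i)) s
  (t : term Sg G s) {struct t} : tm s :=
  match t in term _ _ s return tm s with
  | tvar i => env i
  | tren _ a b _ _ hb t' => tm_act (ren_inj a hb) (tm_of_term env t')
  | twk S0 a _ t' => tm_act (wk_inj S0 a) (tm_of_term env t')
  | top o ts => tm_op (tms_of_terms env ts)
  end
with tms_of_terms G (env : forall i : 'I_(size G), tm (nth fset0 G i)) l
  (ts : terms Sg G l) {struct ts} : tms l :=
  match ts in terms _ _ l return tms l with
  | tnil => tms_nil
  | tcons _ _ t ts' => tms_cons (tm_of_term env t) (tms_of_terms env ts')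
  end.

Inductive tm_eqv : forall S, tm S -> tm S -> Prop :=
| tm_eqv_refl S (t : tm S) : tm_eqv t t
| tm_eqv_sym S (t t' : tm S) : tm_eqv t t' -> tm_eqv t' t
| tm_eqv_trans S (t1 t2 t3 : tm S) : tm_eqv t1 t2 -> tm_eqv t2 t3 -> tm_eqv t1 t3
| tm_eqv_var S T (f : Inj S T) x : tm_eqv (tm_var (pact X f x)) (tm_act f (tm_var x))
| tm_eqv_act_id S (t : tm S) : tm_eqv (tm_act (iid S) t) t
| tm_eqv_act_comp S T U (f : Inj S T) (g : Inj T U) t :
    tm_eqv (tm_act (icomp g f) t) (tm_act g (tm_act f t))
| tm_eqv_act S T (f : Inj S T) t t' : tm_eqv t t' -> tm_eqv (tm_act f t) (tm_act f t')
| tm_eqv_op o (ts ts' : tms (sar o)) : tms_eqv ts ts' -> tm_eqv (tm_op ts) (tm_op ts')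
| tm_eqv_axiom (e : equation Sg) : th_eqs e -> forall env,
    tm_eqv (tm_of_term env (eq_lhs e)) (tm_of_term env (eq_rhs e))
with tms_eqv : forall l, tms l -> tms l -> Prop :=
| tms_eqv_nil : tms_eqv tms_nil tms_nil
| tms_eqv_cons s l (t t' : tm s) (ts ts' : tms l) :
    tm_eqv t t' -> tms_eqv ts ts' -> tms_eqv (tms_cons t ts) (tms_cons t' ts').

Scheme tm_eqv_mind := Induction for tm_eqv Sort Prop
with tms_eqv_mind := Induction for tms_eqv Sort Prop.

Definition free_presheaf : presheaf :=
  quo_presheaf (@tm_eqv_refl) (@tm_eqv_sym) (@tm_eqv_trans) (@tm_eqv_act)
    (@tm_eqv_act_id) (@tm_eqv_act_comp).

Notation fcl := (qclass (@tm_eqv _)).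
Notation frep := (@qrepr _ (@tm_eqv _)).

Lemma eq_fcl S (t t' : tm S) : tm_eqv t t' -> fcl t = fcl t'.
Proof. exact: (eq_qclass (@tm_eqv_sym S) (@tm_eqv_trans S)). Qed.

Lemma fclK S (t : tm S) : tm_eqv (frep (fcl t)) t.
Proof. exact: (qclassK (@tm_eqv_refl S)). Qed.

Lemma free_act_fcl S T (f : Inj S T) (t : tm S) :
  pact free_presheaf f (fcl t) = fcl (tm_act f t).
Proof. exact: quo_presheaf_act. Qed.

Fixpoint frep_tuple l : hprod free_presheaf l -> tms l :=
  match l return hprod free_presheaf l -> tms l with
  | [::] => fun _ => tms_nil
  | s :: l' => fun p => tms_cons (frep p.1) (frep_tuple p.2)
  end.

Fixpoint fcl_tuple l (ts : tms l) : hprod free_presheaf l :=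
  match ts in tms l return hprod free_presheaf l with
  | tms_nil => tt
  | tms_cons _ _ t ts' => (fcl t, fcl_tuple ts')
  end.

Lemma fcl_tupleK l (ts : tms l) : tms_eqv (frep_tuple (fcl_tuple ts)) ts.
Proof.
elim: ts => [|s l' t ts IH] /=; first exact: tms_eqv_nil.
by apply: tms_eqv_cons => //; apply: fclK.
Qed.

Definition free_op (o : sop Sg) (args : hprod free_presheaf (sar o)) :
  free_presheaf (stg o) := fcl (tm_op (frep_tuple args)).

Lemma free_op_fcl o (ts : tms (sar o)) : free_op (fcl_tuple ts) = fcl (tm_op ts).
Proof. by apply/eq_fcl/tm_eqv_op; exact: fcl_tupleK. Qed.

Lemma eval_fcl G (env : forall i : 'I_(size G), tm (nth fset0 G i)) s (t : term Sg G s) :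
  eval (A := free_presheaf) free_op (fun i => fcl (env i)) t = fcl (tm_of_term env t).
Proof.
move: s t; apply: (term_mind
  (P := fun s t => eval (A := free_presheaf) free_op (fun i => fcl (env i)) t =
                   fcl (tm_of_term env t))
  (P0 := fun l ts => evals (A := free_presheaf) free_op (fun i => fcl (env i)) ts =
                     fcl_tuple (tms_of_terms env ts))).
- by [].
- by move=> S a b _ _ hb t IH /=; rewrite IH; exact: free_act_fcl.
- by move=> S a _ t IH /=; rewrite IH; exact: free_act_fcl.
- by move=> o ts IH /=; rewrite IH free_op_fcl.
- by [].
- by move=> s l t IH ts IHs /=; rewrite IH IHs.
Qed.

Lemma free_sat (e : equation Sg) : th_eqs e ->
  forall env : (forall i : 'I_(size (eq_ctx e)), free_presheaf (nth fset0 (eq_ctx e) i)),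
  eval free_op env (eq_lhs e) = eval free_op env (eq_rhs e).
Proof.
move=> he env.
have -> : env = (fun i => fcl (frep (env i))).
  by apply: functional_extensionality_dep => i; rewrite qreprK.
by rewrite !eval_fcl; apply/eq_fcl/tm_eqv_axiom.
Qed.

Definition free_model : model Th := Build_model free_sat.

Lemma free_unit_nat S T (f : Inj S T) (x : X S) :
  fcl (tm_var (pact X f x)) = pact free_model f (fcl (tm_var x)).
Proof. by rewrite free_act_fcl; apply/eq_fcl/tm_eqv_var. Qed.

Definition free_unit : nt X free_model :=
  @Build_nt X free_model (fun S x => fcl (tm_var x)) free_unit_nat.

Section Extension.
Variables (M : model Th) (f : nt X M).

Fixpoint tm_eval S (t : tm S) {struct t} : M S :=
  match t in tm S return M S with
  | tm_var S0 x => ntf f S0 x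
  | tm_act _ _ g t => pact M g (tm_eval t)
  | tm_op o ts => mop M o (tms_eval ts)
  end
with tms_eval l (ts : tms l) {struct ts} : hprod M l :=
  match ts in tms l return hprod M l with
  | tms_nil => tt
  | tms_cons _ _ t ts => (tm_eval t, tms_eval ts)
  end.

Lemma tm_eval_of_term G (env : forall i : 'I_(size G), tm (nth fset0 G i)) s
  (t : term Sg G s) :
  tm_eval (tm_of_term env t) = eval (mop M) (fun i => tm_eval (env i)) t.
Proof.
move: s t; apply: (term_mind
  (P := fun s t => tm_eval (tm_of_term env t) = eval (mop M) (fun i => tm_eval (env i)) t)
  (P0 := fun l ts => tms_eval (tms_of_terms env ts) =
                     evals (mop M) (fun i => tm_eval (env i)) ts)).
- by [].
- by move=> S a b _ _ hb t IH /=; rewrite IH.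
- by move=> S a _ t IH /=; rewrite IH.
- by move=> o ts IH /=; rewrite IH.
- by [].
- by move=> s l t IH ts IHs /=; rewrite IH IHs.
Qed.

Lemma tm_eval_eqv S (t t' : tm S) : tm_eqv t t' -> tm_eval t = tm_eval t'.
Proof.
move: S t t'; apply: (tm_eqv_mind (P := fun S t t' _ => tm_eval t = tm_eval t')
                                  (P0 := fun l ts ts' _ => tms_eval ts = tms_eval ts')).
- by [].
- by move=> S t t' _ ->.
- by move=> S t1 t2 t3 _ -> _ ->.
- by move=> S T g x /=; rewrite ntnat.
- by move=> S t /=; rewrite pact_id.
- by move=> S T U g h t /=; rewrite pact_comp.
- by move=> S T g t t' _ /= ->.
- by move=> o ts ts' _ /= ->.
- by move=> e he env; rewrite !tm_eval_of_term; apply: msat.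
- by [].
- by move=> s l t t' ts ts' _ /= -> _ ->.
Qed.

Definition free_ext_fun S (q : free_model S) : M S := tm_eval (frep q).

Lemma free_ext_fcl S (t : tm S) : free_ext_fun (fcl t) = tm_eval t.
Proof. exact/tm_eval_eqv/fclK. Qed.

Lemma free_ext_nat S T (g : Inj S T) (q : free_model S) :
  free_ext_fun (pact free_model g q) = pact M g (free_ext_fun q).
Proof. exact: free_ext_fcl. Qed.

Lemma tms_eval_frep l (args : hprod free_model l) :
  tms_eval (frep_tuple args) = hmap free_ext_fun args.
Proof. by elim: l args => [|s l IH] args //=; rewrite IH. Qed.

Lemma free_ext_op o (args : hprod free_model (sar o)) :
  free_ext_fun (mop free_model o args) = mop M o (hmap free_ext_fun args).
Proof. by rewrite /= /free_op free_ext_fcl /= tms_eval_frep. Qed.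

Definition free_ext : mhom free_model M :=
  @Build_mhom Th free_model M (Build_nt free_ext_nat) free_ext_op.

Lemma free_ext_unit : nt_eq (nt_comp (mh_nt free_ext) free_unit) f.
Proof. by move=> S x /=; rewrite free_ext_fcl. Qed.

Lemma free_ext_unique (g : mhom free_model M) :
  nt_eq (nt_comp (mh_nt g) free_unit) f -> nt_eq (mh_nt g) (mh_nt free_ext).
Proof.
move=> gf.
have g_fcl S (t : tm S) : ntf (mh_nt g) S (fcl t) = tm_eval t.
  move: S t; apply: (tm_mind (P := fun S t => ntf (mh_nt g) S (fcl t) = tm_eval t)
                 (P0 := fun l ts => hmap (ntf (mh_nt g)) (fcl_tuple ts) = tms_eval ts)).
  - by move=> S x; exact: gf.
  - by move=> S T h t IH /=; rewrite -free_act_fcl ntnat IH.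
  - by move=> o ts IH /=; rewrite -free_op_fcl (mh_op g) IH.
  - by [].
  - by move=> s l t IH ts IHs /=; rewrite IH IHs.
by move=> S q /=; rewrite -{1}(qreprK q) g_fcl.
Qed.

End Extension.
End FreeModel.

Definition free_left_adjoint (Th : ua_theory) : left_adjoint Th :=
  Build_left_adjoint (@free_ext_unit Th) (@free_ext_unique Th).

(** * Coequalizers *)

Section QuotientModel.
Variables (Th : ua_theory) (M : model Th) (R : forall S, M S -> M S -> Prop).
Hypothesis Rr : forall S (x : M S), R x x.
Hypothesis Rs : forall S (x y : M S), R x y -> R y x.
Hypothesis Rt : forall S (x y z : M S), R x y -> R y z -> R x z.
Hypothesis R_act : forall S T (f : Inj S T) (x y : M S), R x y -> R (pact M f x) (pact M f y).
Hypothesis R_op : forall o (xs ys : hprod M (sar o)),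
  hrel R xs ys -> R (mop M o xs) (mop M o ys).

Notation qcl := (fun S => qclass (@R S)).
Notation qrep := (fun S => @qrepr _ (@R S)).

Lemma R_pact_id S (x : M S) : R (pact M (iid S) x) x.
Proof. by rewrite pact_id. Qed.

Lemma R_pact_comp S T U (f : Inj S T) (g : Inj T U) (x : M S) :
  R (pact M (icomp g f) x) (pact M g (pact M f x)).
Proof. by rewrite pact_comp. Qed.

Definition quo_model_presheaf : presheaf :=
  quo_presheaf Rr Rs Rt R_act R_pact_id R_pact_comp.

Definition quo_op o (args : hprod quo_model_presheaf (sar o)) :
  quo_model_presheaf (stg o) := qcl _ (mop M o (hmap qrep args)).

Lemma hrel_qclassK l (xs : hprod M l) : hrel R xs (hmap qrep (hmap qcl xs)).
Proof. by elim: l xs => [|s l IH] xs //=; split => //; apply/Rs; exact: qclassK. Qed.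

Lemma quo_op_qclass o (xs : hprod M (sar o)) :
  qcl _ (mop M o xs) = quo_op (hmap qcl xs).
Proof. by apply: (eq_qclass (@Rs _) (@Rt _)); apply/R_op; exact: hrel_qclassK. Qed.

Lemma quo_model_act S T (f : Inj S T) (x : M S) :
  pact quo_model_presheaf f (qcl _ x) = qcl _ (pact M f x).
Proof. exact: quo_presheaf_act. Qed.

Lemma quo_sat (e : equation (th_sig Th)) : th_eqs e ->
  forall env : (forall i : 'I_(size (eq_ctx e)), quo_model_presheaf (nth fset0 (eq_ctx e) i)),
  eval quo_op env (eq_lhs e) = eval quo_op env (eq_rhs e).
Proof.
move=> he env.
have -> : env = (fun i => qcl _ (qrep _ (env i))).
  by apply: functional_extensionality_dep => i; rewrite qreprK.
apply: (eval_sat_hom (B := quo_model_presheaf) (h := qcl)) => //.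
- by move=> S T f x; rewrite quo_model_act.
- exact: quo_op_qclass.
Qed.

Definition quo_model : model Th := Build_model quo_sat.

Definition quo_mhom : mhom M quo_model :=
  @Build_mhom Th M quo_model
    (@Build_nt M quo_model qcl (fun S T f x => esym (quo_model_act f x))) quo_op_qclass.

End QuotientModel.

Lemma coequalizer_epi (B C E E' : presheaf) (p q : nt B C) (e : nt C E) (u v : nt E E') :
  is_coequalizer p q e -> nt_eq (nt_comp u e) (nt_comp v e) -> nt_eq u v.
Proof.
case=> epq univ uv.
have ue_coeq : nt_eq (nt_comp (nt_comp u e) p) (nt_comp (nt_comp u e) q).
  by move=> S x; have /= -> := epq S x.
have [w [_ w_uniq]] := univ _ _ ue_coeq.
by move=> S x; rewrite (w_uniq u) // (w_uniq v) // => T y; rewrite -uv.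
Qed.

Section CanonicalPresentation.
Variable A : presheaf.

Definition FU_unit S (a : A S) : FU A S := existT _ S (iid S, a).

(* The common section making the canonical pair reflexive. *)
Definition FU_section_fun S (x : FU A S) : FU (FU A) S :=
  let: existT S' (g, y) := x in existT _ S' (g, FU_unit y).

Lemma FU_section_nat S T (f : Inj S T) (x : FU A S) :
  FU_section_fun (pact (FU A) f x) = pact (FU (FU A)) f (FU_section_fun x).
Proof. by case: x => S' []. Qed.

Definition FU_section : nt (FU A) (FU (FU A)) := Build_nt FU_section_nat.

Lemma FUeps_section : nt_eq (nt_comp (FUeps A) FU_section) (nt_id (FU A)).
Proof. by move=> S [S' [g y]]; rewrite /= /FUeps_fun /= /eps_fun /= pact_id. Qed.

Lemma eps_FU_section : nt_eq (nt_comp (eps (FU A)) FU_section) (nt_id (FU A)).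
Proof.
move=> S [S' [g y]]; rewrite /= /eps_fun /= /FU_act /=.
by have -> : icomp g (iid S') = g by apply: Inj_ext.
Qed.

Lemma eps_coequalizer : is_coequalizer (FUeps A) (eps (FU A)) (eps A).
Proof.
split; first by move=> S [S' [g [S'' [h y]]]]; rewrite /= /eps_fun /= pact_comp.
move=> E' e' e'_coeq.
have e'E S S' (g : Inj S' S) y : ntf e' S (existT _ S' (g, y)) = ntf e' S (FU_unit (pact A g y)).
  have := e'_coeq S (existT _ S (iid S, existT _ S' (g, y))).
  rewrite /= /eps_fun /FUeps_fun /FU_act /= => ->.
  by have -> : icomp (iid S) g = g by apply: Inj_ext.
pose u S (a : A S) := ntf e' S (FU_unit a).
have u_nat S T (f : Inj S T) (a : A S) : u T (pact A f a) = pact E' f (u S a).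
  by rewrite /u -ntnat /= /FU_act e'E /= pact_comp pact_id.
exists (Build_nt u_nat); split; first by move=> S [S' [g y]] /=; rewrite e'E.
by move=> u' u'_eps S a /=; rewrite /u -u'_eps /= /eps_fun /= pact_id.
Qed.

End CanonicalPresentation.

(* The monad preserves coequalizers of reflexive pairs: T E is the quotient
   of the model T C by the congruence generated by the pairs (T p w, T q w),
   which the common section T s makes compatible with the operations. *)
Section ReflexiveCoequalizer.
Variables (Th : ua_theory) (L : left_adjoint Th).
Variables (B C E : presheaf) (p q : nt B C) (s : nt C B) (e : nt C E).
Hypothesis ps : nt_eq (nt_comp p s) (nt_id C).
Hypothesis qs : nt_eq (nt_comp q s) (nt_id C).
Hypothesis e_coeq : is_coequalizer p q e.

Notation TB := (fr_ob L B).
Notation TC := (fr_ob L C).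
Notation TE := (fr_ob L E).
Notation Tp := (ntf (Tmap L p) _).
Notation Tq := (ntf (Tmap L q) _).
Notation Ts := (ntf (Tmap L s) _).
Notation Te := (ntf (Tmap L e) _).

Lemma Tmap_retract (r : nt B C) : nt_eq (nt_comp r s) (nt_id C) ->
  forall S (z : TC S), ntf (Tmap L r) S (Ts z) = z.
Proof. by move=> rs S z; rewrite -Tmap_comp (Tmap_ext rs) Tmap_id. Qed.

Definition Tpair_rel S (z z' : TC S) : Prop := exists w, z = Tp w /\ z' = Tq w.

Definition Tcoeq_rel S : TC S -> TC S -> Prop :=
  clos_refl_sym_trans _ (@Tpair_rel S).

Lemma Tcoeq_rel_act S T (f : Inj S T) (z z' : TC S) :
  Tcoeq_rel z z' -> Tcoeq_rel (pact TC f z) (pact TC f z').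
Proof.
apply: clos_rst_map => _ _ [w [-> ->]]; apply: rst_step.
by exists (pact TB f w); rewrite !ntnat.
Qed.

Definition Tpair_rel_tuple l (xs ys : hprod TC l) : Prop :=
  exists ws : hprod TB l, xs = hmap (ntf (Tmap L p)) ws /\ ys = hmap (ntf (Tmap L q)) ws.

Lemma Tmap_retract_tuple (r : nt B C) : nt_eq (nt_comp r s) (nt_id C) ->
  forall l (xs : hprod TC l), hmap (ntf (Tmap L r)) (hmap (ntf (Tmap L s)) xs) = xs.
Proof. by move=> rs l xs; rewrite hmap_comp (eq_hmap _ (Tmap_retract rs)) hmap_id. Qed.

Lemma hrel_Tcoeq_rel l (xs ys : hprod TC l) :
  hrel Tcoeq_rel xs ys -> clos_refl_sym_trans _ (@Tpair_rel_tuple l) xs ys.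
Proof.
elim: l xs ys => [|S l IH] xs ys /=; first by case: xs; case: ys => _; apply: rst_refl.
case: xs ys => x xs [y ys] /= [xy /IH xys].
apply: (rst_trans _ _ _ (y, xs)).
- apply: (clos_rst_map (F := fun x => (x, xs) : hprod TC (S :: l))) xy.
  move=> _ _ [w [-> ->]]; apply: rst_step.
  by exists (w, hmap (ntf (Tmap L s)) xs); rewrite /= !Tmap_retract_tuple.
- apply: (clos_rst_map (F := fun xs => (y, xs) : hprod TC (S :: l))) xys.
  move=> _ _ [ws [-> ->]]; apply: rst_step.
  by exists (Ts y, ws); rewrite /= !Tmap_retract.
Qed.

Lemma Tcoeq_rel_op o (xs ys : hprod TC (sar o)) :
  hrel Tcoeq_rel xs ys -> Tcoeq_rel (mop TC o xs) (mop TC o ys).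
Proof.
move=> /hrel_Tcoeq_rel; apply: clos_rst_map => _ _ [ws [-> ->]]; apply: rst_step.
by exists (mop TB o ws); rewrite !Tmap_op.
Qed.

Notation Tcoeq_refl := (fun S => @rst_refl _ (@Tpair_rel S)).
Notation Tcoeq_sym := (fun S => @rst_sym _ (@Tpair_rel S)).
Notation Tcoeq_trans := (fun S => @rst_trans _ (@Tpair_rel S)).

Definition Tcoeq_model : model Th :=
  quo_model Tcoeq_refl Tcoeq_sym Tcoeq_trans Tcoeq_rel_act Tcoeq_rel_op.

Definition Tcoeq_proj : mhom TC Tcoeq_model :=
  quo_mhom Tcoeq_refl Tcoeq_sym Tcoeq_trans Tcoeq_rel_act Tcoeq_rel_op.

Notation qcl := (qclass (@Tcoeq_rel _)).
Notation qrep := (@qrepr _ (@Tcoeq_rel _)).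

Lemma eq_Tcoeq_proj S (z z' : TC S) : Tcoeq_rel z z' -> qcl z = qcl z'.
Proof. exact: (eq_qclass (@rst_sym _ _) (@rst_trans _ _)). Qed.

Lemma Tcoeq_projK S (z : TC S) : Tcoeq_rel (qrep (qcl z)) z.
Proof. exact: (qclassK (@rst_refl _ _)). Qed.

Lemma Tcoeq_rel_resp (E' : presheaf) (e' : nt TC E') :
  nt_eq (nt_comp e' (Tmap L p)) (nt_comp e' (Tmap L q)) ->
  forall S (z z' : TC S), Tcoeq_rel z z' -> ntf e' S z = ntf e' S z'.
Proof. by move=> e'pq S; apply: clos_rst_eq => _ _ [w [-> ->]]; apply: e'pq. Qed.

Lemma Te_coeq : nt_eq (nt_comp (Tmap L e) (Tmap L p)) (nt_comp (Tmap L e) (Tmap L q)).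
Proof. by move=> S z /=; rewrite -!Tmap_comp (Tmap_ext (proj1 e_coeq)). Qed.

Lemma unit_Tcoeq_proj_coeq :
  nt_eq (nt_comp (nt_comp (mh_nt Tcoeq_proj) (fr_unit L C)) p)
        (nt_comp (nt_comp (mh_nt Tcoeq_proj) (fr_unit L C)) q).
Proof.
move=> S w /=; apply/eq_Tcoeq_proj/rst_step.
by exists (ntf (fr_unit L B) S w); rewrite !Tmap_unit.
Qed.

(* [kappa] is the factorization through e supplied by the coequalizer
   property; it is a section variable because it only exists in Prop. *)
Section Comparison.
Variable kappa : nt E Tcoeq_model.
Hypothesis kappa_e :
  nt_eq (nt_comp kappa e) (nt_comp (mh_nt Tcoeq_proj) (fr_unit L C)).

Definition Tcoeq_to_TE_fun S (x : Tcoeq_model S) : TE S := Te (qrep x).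

Lemma Tcoeq_to_TE_proj S (z : TC S) : Tcoeq_to_TE_fun (qcl z) = Te z.
Proof. exact/(Tcoeq_rel_resp Te_coeq)/Tcoeq_projK. Qed.

Lemma Tcoeq_to_TE_nat S T (f : Inj S T) (x : Tcoeq_model S) :
  Tcoeq_to_TE_fun (pact Tcoeq_model f x) = pact TE f (Tcoeq_to_TE_fun x).
Proof. by rewrite /Tcoeq_to_TE_fun -ntnat; apply/(Tcoeq_rel_resp Te_coeq)/Tcoeq_projK. Qed.

Lemma Tcoeq_to_TE_op o (args : hprod Tcoeq_model (sar o)) :
  Tcoeq_to_TE_fun (mop Tcoeq_model o args) = mop TE o (hmap Tcoeq_to_TE_fun args).
Proof. by rewrite /= /quo_op Tcoeq_to_TE_proj Tmap_op hmap_comp. Qed.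

Definition Tcoeq_to_TE : mhom Tcoeq_model TE :=
  @Build_mhom Th Tcoeq_model TE (Build_nt Tcoeq_to_TE_nat) Tcoeq_to_TE_op.

Notation kh := (fr_ext L kappa).

Lemma Tcoeq_proj_factor S (z : TC S) :
  ntf (mh_nt Tcoeq_proj) S z = ntf (mh_nt kh) S (Te z).
Proof.
apply: (free_mhom_eq (g2 := mhom_comp kh (Tmhom L e))) => T x /=.
by rewrite -/(Tmap L e) Tmap_unit fr_extE; exact: esym (kappa_e x).
Qed.

Lemma Tcoeq_to_TE_kappa : nt_eq (nt_comp (mh_nt Tcoeq_to_TE) kappa) (fr_unit L E).
Proof.
apply: (coequalizer_epi e_coeq) => S x /=.
by have /= -> := kappa_e x; rewrite Tcoeq_to_TE_proj Tmap_unit.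
Qed.

Lemma Tcoeq_to_TEK S (y : TE S) : Tcoeq_to_TE_fun (ntf (mh_nt kh) S y) = y.
Proof.
apply: (free_mhom_eq (g1 := mhom_comp Tcoeq_to_TE kh) (g2 := mhom_id _)) => T a /=.
by rewrite fr_extE; apply: Tcoeq_to_TE_kappa.
Qed.

Lemma Tmap_coequalizer_of : is_coequalizer (Tmap L p) (Tmap L q) (Tmap L e).
Proof.
split; first exact: Te_coeq.
move=> E' e' e'_coeq.
pose u S (y : TE S) := ntf e' S (qrep (ntf (mh_nt kh) S y)).
have u_nat S T (f : Inj S T) (y : TE S) : u T (pact TE f y) = pact E' f (u S y).
  rewrite /u ntnat /= -ntnat; apply: (Tcoeq_rel_resp e'_coeq).
  exact: (qclassK (@rst_refl _ _)).
exists (Build_nt u_nat); split.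
- move=> S z /=; rewrite /u -Tcoeq_proj_factor.
  exact/(Tcoeq_rel_resp e'_coeq)/Tcoeq_projK.
- by move=> u' u'_Te S y /=; rewrite -{1}(Tcoeq_to_TEK y); apply: u'_Te.
Qed.

End Comparison.

Lemma Tmap_reflexive_coequalizer : is_coequalizer (Tmap L p) (Tmap L q) (Tmap L e).
Proof.
have [kappa [kappa_e _]] := proj2 e_coeq _ _ unit_Tcoeq_proj_coeq.
exact: Tmap_coequalizer_of kappa_e.
Qed.

End ReflexiveCoequalizer.

Lemma based_monad (Th : ua_theory) (L : left_adjoint Th) : based L.
Proof.
move=> A.
exact (Tmap_reflexive_coequalizer L (@FUeps_section A) (@eps_FU_section A) (eps_coequalizer A)).
Qed.

(** * Filtered colimits *)

(* A filtered colimit of models is computed on underlying presheaves: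
   elements are pairs (i, x) identified when they become equal further
   along the diagram, and an operation is evaluated by first moving its
   finitely many arguments into a common model of the diagram. *)
Section FilteredColimitOfModels.
Variables (Th : ua_theory) (J : smallcat).
Variables (M : cob J -> model Th) (m : forall i j, chom i j -> mhom (M i) (M j)).
Hypothesis J_filtered : filtered J.
Hypothesis m_id : forall i S (x : M i S), ntf (mh_nt (m (cid i))) S x = x.
Hypothesis m_comp : forall i j k (u : chom i j) (v : chom j k) S (x : M i S),
  ntf (mh_nt (m (ccomp v u))) S x = ntf (mh_nt (m v)) S (ntf (mh_nt (m u)) S x).

Notation mm u := (ntf (mh_nt (m u)) _).

Lemma filtered_join (i j : cob J) : exists k, inhabited (chom i k * chom j k).
Proof. by have [k [[u] [v]]] := proj1 (proj2 J_filtered) i j; exists k; constructor. Qed.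

Lemma filtered_coeq (i j : cob J) (u v : chom i j) :
  exists k (w : chom j k), ccomp w u = ccomp w v.
Proof. exact: (proj2 (proj2 J_filtered)). Qed.

Lemma filtered_ub n (js : 'I_n -> cob J) : exists k, forall i, inhabited (chom (js i) k).
Proof.
suff [k jk] : exists k, forall i, i \in enum 'I_n -> inhabited (chom (js i) k).
  by exists k => i; apply: jk; rewrite mem_enum.
elim: (enum 'I_n) => [|i0 s [k jk]]; first by have [k] := proj1 J_filtered; exists k.
have [k' [[a b]]] := filtered_join k (js i0); exists k' => i; rewrite in_cons.
case: (i =P i0) => [-> _|_ /= /jk [t]]; constructor; [exact: b | exact: ccomp a t].
Qed.

Definition colim_elt S := {i : cob J & M i S}.

Definition colim_act S T (f : Inj S T) (x : colim_elt S) : colim_elt T :=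
  existT _ (projT1 x) (pact (M (projT1 x)) f (projT2 x)).

Definition colim_rel S (x y : colim_elt S) : Prop :=
  exists k (u : chom (projT1 x) k) (v : chom (projT1 y) k), mm u (projT2 x) = mm v (projT2 y).

Lemma colim_rel_refl S (x : colim_elt S) : colim_rel x x.
Proof. by exists (projT1 x), (cid _), (cid _). Qed.

Lemma colim_rel_sym S (x y : colim_elt S) : colim_rel x y -> colim_rel y x.
Proof. by case=> k [u [v e]]; exists k, v, u. Qed.

Lemma colim_rel_trans S (x y z : colim_elt S) :
  colim_rel x y -> colim_rel y z -> colim_rel x z.
Proof.
case=> k1 [u1 [v1 e1]] [k2 [u2 [v2 e2]]].
have [k3 [[a b]]] := filtered_join k1 k2.
have [k4 [w ew]] := filtered_coeq (ccomp a v1) (ccomp b u2).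
exists k4, (ccomp w (ccomp a u1)), (ccomp w (ccomp b v2)).
by rewrite !m_comp e1 -e2 -(m_comp v1 a) -(m_comp (ccomp a v1) w) ew !m_comp.
Qed.

Lemma colim_rel_act S T (f : Inj S T) (x y : colim_elt S) :
  colim_rel x y -> colim_rel (colim_act f x) (colim_act f y).
Proof. by case=> k [u [v e]]; exists k, u, v; rewrite /= !ntnat e. Qed.

Lemma colim_act_id S (x : colim_elt S) : colim_rel (colim_act (iid S) x) x.
Proof. by case: x => i x; rewrite /colim_act /= pact_id; apply: colim_rel_refl. Qed.

Lemma colim_act_comp S T U (f : Inj S T) (g : Inj T U) (x : colim_elt S) :
  colim_rel (colim_act (icomp g f) x) (colim_act g (colim_act f x)).
Proof. by case: x => i x; rewrite /colim_act /= pact_comp; apply: colim_rel_refl. Qed.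

Lemma colim_rel_equalize S i j (x : M i S) (y : M j S) :
  colim_rel (existT _ i x) (existT _ j y) ->
  forall k (u : chom i k) (v : chom j k), exists n (r : chom k n), mm r (mm u x) = mm r (mm v y).
Proof.
case=> k0 [u0 [v0 /= e0]] k u v.
have [k1 [[a b]]] := filtered_join k k0.
have [k2 [c ec]] := filtered_coeq (ccomp a u) (ccomp b u0).
have [k3 [d ed]] := filtered_coeq (ccomp c (ccomp a v)) (ccomp c (ccomp b v0)).
exists k3, (ccomp d (ccomp c a)).
by rewrite -!m_comp -!ccomp_assoc ed ec !m_comp e0.
Qed.

Definition colim_presheaf : presheaf :=
  quo_presheaf colim_rel_refl colim_rel_sym colim_rel_trans colim_rel_act
    colim_act_id colim_act_comp.

Definition colim_in_fun i S (x : M i S) : colim_presheaf S :=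
  qclass (@colim_rel S) (existT _ i x).

Lemma colim_in_nat i S T (f : Inj S T) (x : M i S) :
  colim_in_fun (pact (M i) f x) = pact colim_presheaf f (colim_in_fun x).
Proof. by rewrite /colim_in_fun quo_presheaf_act. Qed.

Lemma colim_in_eq i S (x : M i S) j (y : M j S) :
  colim_in_fun x = colim_in_fun y -> colim_rel (existT _ i x) (existT _ j y).
Proof. exact: (qclass_eq (@colim_rel_refl S)). Qed.

Lemma colim_in_m i j (u : chom i j) S (x : M i S) : colim_in_fun (mm u x) = colim_in_fun x.
Proof.
apply: (eq_qclass (@colim_rel_sym S) (@colim_rel_trans S)).
by exists j, (cid j), u; rewrite /= m_id.
Qed.

Lemma colim_in_qrepr S (q : colim_presheaf S) : colim_in_fun (projT2 (qrepr q)) = q.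
Proof. by rewrite /colim_in_fun -{3}(qreprK q); case: (qrepr q). Qed.

Lemma colim_tuple_lift l (args : hprod colim_presheaf l) :
  exists k (xs : hprod (M k) l), hmap (@colim_in_fun k) xs = args.
Proof.
elim: l args => [|s l IH] args /=.
  by have [k] := proj1 J_filtered; exists k, tt; case: args.
case: args => a r; have [k1 [xs1 e1]] := IH r.
have [k [[u v]]] := filtered_join (projT1 (qrepr a)) k1.
exists k, (mm u (projT2 (qrepr a)), hmap (ntf (mh_nt (m v))) xs1) => /=.
rewrite colim_in_m colim_in_qrepr hmap_comp -e1; congr pair.
by apply: eq_hmap => s' y; rewrite colim_in_m.
Qed.

Lemma colim_tuple_equalize l k1 k2 (xs1 : hprod (M k1) l) (xs2 : hprod (M k2) l) :
  hmap (@colim_in_fun k1) xs1 = hmap (@colim_in_fun k2) xs2 ->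
  forall K (u : chom k1 K) (v : chom k2 K), exists n (r : chom K n),
    hmap (ntf (mh_nt (m (ccomp r u)))) xs1 = hmap (ntf (mh_nt (m (ccomp r v)))) xs2.
Proof.
elim: l xs1 xs2 => [|s l IH] xs1 xs2 /=; first by move=> _ K u v; exists K, (cid K).
case: xs1 xs2 => x1 r1 [x2 r2] e12 K u v.
have ex := colim_in_eq (congr1 fst e12); have er := congr1 snd e12.
have [n1 [t1 et1]] := colim_rel_equalize ex u v.
have [n2 [t2 et2]] := IH _ _ er n1 (ccomp t1 u) (ccomp t1 v).
exists n2, (ccomp t2 t1); rewrite -!ccomp_assoc; congr pair => //.
by rewrite !m_comp et1.
Qed.

Definition colim_lift (o : sop (th_sig Th)) (args : hprod colim_presheaf (sar o)) :
  {k : cob J & {xs : hprod (M k) (sar o) | hmap (@colim_in_fun k) xs = args}}.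
Proof.
have [k xs_k] := constructive_indefinite_description _ (colim_tuple_lift args).
by exists k; apply: constructive_indefinite_description.
Defined.

Definition colim_op (o : sop (th_sig Th)) (args : hprod colim_presheaf (sar o)) : colim_presheaf (stg o) :=
  colim_in_fun (mop (M (projT1 (colim_lift args))) o (proj1_sig (projT2 (colim_lift args)))).

Lemma colim_op_in (o : sop (th_sig Th)) k (xs : hprod (M k) (sar o)) :
  colim_op (hmap (@colim_in_fun k) xs) = colim_in_fun (mop (M k) o xs).
Proof.
rewrite /colim_op; case: colim_lift => k' [xs' e] /=.
have [K [[u v]]] := filtered_join k' k.
have [n [r er]] := colim_tuple_equalize e u v.
rewrite -(colim_in_m (ccomp r u)) -(colim_in_m (ccomp r v)).
by rewrite (mh_op (m (ccomp r u))) (mh_op (m (ccomp r v))) er.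
Qed.

Lemma colim_sat (e : equation (th_sig Th)) : th_eqs e ->
  forall env : (forall i : 'I_(size (eq_ctx e)), colim_presheaf (nth fset0 (eq_ctx e) i)),
  eval colim_op env (eq_lhs e) = eval colim_op env (eq_rhs e).
Proof.
move=> he env.
have [k jk] := filtered_ub (fun i => projT1 (qrepr (env i))).
pose u i := proj1_sig (constructive_indefinite_description _
  (match jk i with inhabits a => ex_intro (fun _ => True) a I end)).
have -> : env = (fun i => colim_in_fun (mm (u i) (projT2 (qrepr (env i))))).
  by apply: functional_extensionality_dep => i; rewrite colim_in_m colim_in_qrepr.
apply: (eval_sat_hom (M := M k) (B := colim_presheaf) (h := @colim_in_fun k)) => //.
- by move=> S T f x; rewrite colim_in_nat.
- by move=> o xs; rewrite colim_op_in.
Qed.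

Definition colim_model : model Th := Build_model colim_sat.

Definition colim_in i : mhom (M i) colim_model :=
  @Build_mhom Th (M i) colim_model (Build_nt (@colim_in_nat i))
    (fun o xs => esym (colim_op_in xs)).

Section Descent.
Variables (N : presheaf) (c : forall i, nt (M i) N).
Hypothesis c_cocone : forall i j (u : chom i j) S (x : M i S),
  ntf (c j) S (mm u x) = ntf (c i) S x.

Definition colim_desc_fun S (q : colim_model S) : N S :=
  ntf (c (projT1 (qrepr q))) S (projT2 (qrepr q)).

Lemma colim_desc_in i S (x : M i S) : colim_desc_fun (colim_in_fun x) = ntf (c i) S x.
Proof.
rewrite /colim_desc_fun; case: (qclassK (@colim_rel_refl S) (existT _ i x)).
case: (qrepr _) => j y /= k [u [v /= e]].
by rewrite -(c_cocone u) e c_cocone.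
Qed.

Lemma colim_desc_nat S T (f : Inj S T) (q : colim_model S) :
  colim_desc_fun (pact colim_model f q) = pact N f (colim_desc_fun q).
Proof. by rewrite -{1}(colim_in_qrepr q) -colim_in_nat colim_desc_in ntnat. Qed.

Definition colim_desc : nt colim_model N := Build_nt colim_desc_nat.

Lemma colim_desc_unique (u : nt colim_model N) :
  (forall i S (x : M i S), ntf u S (colim_in_fun x) = ntf (c i) S x) -> nt_eq u colim_desc.
Proof. by move=> uc S q; rewrite -{1}(colim_in_qrepr q) uc. Qed.

End Descent.

Definition colim_desc_mhom (N : model Th) (h : forall i, mhom (M i) N)
  (h_cocone : forall i j (u : chom i j) S (x : M i S),
     ntf (mh_nt (h j)) S (mm u x) = ntf (mh_nt (h i)) S x) : mhom colim_model N.
Proof.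
refine (@Build_mhom Th colim_model N (colim_desc h_cocone) _) => o args.
have [k [xs <-]] := colim_tuple_lift args.
rewrite /= colim_op_in (colim_desc_in h_cocone) (mh_op (h k)) hmap_comp.
by congr (mop N o _); apply: eq_hmap => s x; rewrite (colim_desc_in h_cocone).
Defined.

End FilteredColimitOfModels.

(* T C is identified with the filtered colimit of the models T (D i): the
   comparison maps are the extension of the colimit injections (through
   the colimit C) and the descent of the maps T (c i). *)
Section FilteredColimit.
Variables (Th : ua_theory) (L : left_adjoint Th) (J : smallcat) (D : diagram J).
Variables (C : presheaf) (c : forall i, nt (dob D i) C).
Hypothesis J_filtered : filtered J.
Hypothesis D_functorial : functorial D.
Hypothesis c_colimit : is_colimit D C c.

Notation TD i := (fr_ob L (dob D i)).
Notation TC := (fr_ob L C).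
Notation TDm u := (Tmhom L (dmap D u)).

Lemma TDm_id i S (z : TD i S) : ntf (mh_nt (TDm (cid i))) S z = z.
Proof. exact (eq_trans (Tmap_ext (proj1 D_functorial i) z) (Tmap_id z)). Qed.

Lemma TDm_comp i j k (u : chom i j) (v : chom j k) S (z : TD i S) :
  ntf (mh_nt (TDm (ccomp v u))) S z = ntf (mh_nt (TDm v)) S (ntf (mh_nt (TDm u)) S z).
Proof. exact (eq_trans (Tmap_ext (proj2 D_functorial _ _ _ u v) z) (Tmap_comp _ _ z)). Qed.

Notation colimTD := (colim_model J_filtered TDm_id TDm_comp).
Notation inTD i := (colim_in J_filtered TDm_id TDm_comp i).

Lemma Tc_cocone i j (u : chom i j) S (z : TD i S) :
  ntf (Tmap L (c j)) S (ntf (mh_nt (TDm u)) S z) = ntf (Tmap L (c i)) S z.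
Proof. by rewrite -Tmap_comp (Tmap_ext (proj1 c_colimit i j u)). Qed.

Definition colimTD_to_TC : mhom colimTD TC :=
  colim_desc_mhom J_filtered TDm_id TDm_comp (h := fun i => Tmhom L (c i)) Tc_cocone.

Lemma unit_colim_in_cocone :
  is_cocone (fun i => nt_comp (mh_nt (inTD i)) (fr_unit L (dob D i))).
Proof.
by move=> i j u S x /=; rewrite -(Tmap_unit L); exact: (colim_in_m J_filtered TDm_id TDm_comp u).
Qed.

Section Comparison.
Variable phi : nt C colimTD.
Hypothesis phi_c : forall i,
  nt_eq (nt_comp phi (c i)) (nt_comp (mh_nt (inTD i)) (fr_unit L (dob D i))).

Notation TC_to_colimTD := (fr_ext L phi).

Lemma colimTD_to_TC_phi : nt_eq (nt_comp (mh_nt colimTD_to_TC) phi) (fr_unit L C).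
Proof.
have unit_c_cocone : is_cocone (fun i => nt_comp (fr_unit L C) (c i)).
  by move=> i j u S x /=; have /= -> := proj1 c_colimit i j u S x.
have [u0 [_ c_uniq]] := proj2 c_colimit _ _ unit_c_cocone.
move=> S x; rewrite (c_uniq (nt_comp (mh_nt colimTD_to_TC) phi)) ?(c_uniq (fr_unit L C)) //.
by move=> i T y /=; have /= -> := phi_c y; rewrite (colim_desc_in _ _ _ Tc_cocone) Tmap_unit.
Qed.

Lemma colimTD_to_TCK S (z : TC S) :
  ntf (mh_nt colimTD_to_TC) S (ntf (mh_nt TC_to_colimTD) S z) = z.
Proof.
apply: (free_mhom_eq (g1 := mhom_comp colimTD_to_TC TC_to_colimTD) (g2 := mhom_id TC)).
by move=> T x /=; rewrite fr_extE; apply: colimTD_to_TC_phi.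
Qed.

Lemma TC_to_colimTD_Tc i S (z : TD i S) :
  ntf (mh_nt TC_to_colimTD) S (ntf (Tmap L (c i)) S z) = ntf (mh_nt (inTD i)) S z.
Proof.
apply: (free_mhom_eq (g1 := mhom_comp TC_to_colimTD (Tmhom L (c i)))
                     (g2 := inTD i)) => T x /=.
by rewrite -/(Tmap L (c i)) Tmap_unit fr_extE; have /= -> := phi_c x.
Qed.

Lemma Tmap_colimit_of : is_colimit (Tdiag L D) (Tob L C) (fun i => Tmap L (c i)).
Proof.
split; first by move=> i j u S z; apply: Tc_cocone.
move=> N c' c'_cocone.
pose d := colim_desc J_filtered TDm_id TDm_comp c'_cocone.
exists (nt_comp d (mh_nt TC_to_colimTD)); split.
  by move=> i S z /=; rewrite TC_to_colimTD_Tc (colim_desc_in _ _ _ c'_cocone).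
move=> u' u'_c S z; rewrite -{1}(colimTD_to_TCK z).
apply: (colim_desc_unique c'_cocone (u := nt_comp u' (mh_nt colimTD_to_TC))) => i T x /=.
by rewrite (colim_desc_in _ _ _ Tc_cocone); apply: u'_c.
Qed.

End Comparison.

Lemma Tmap_filtered_colimit : is_colimit (Tdiag L D) (Tob L C) (fun i => Tmap L (c i)).
Proof.
have [phi [phi_c _]] := proj2 c_colimit _ _ unit_colim_in_cocone.
exact: Tmap_colimit_of phi_c.
Qed.

End FilteredColimit.

Lemma finitary_monad (Th : ua_theory) (L : left_adjoint Th) : finitary L.
Proof. by move=> J D C c J_filtered D_functorial; apply: Tmap_filtered_colimit. Qed.

Theorem mainTheorem5 (Th : ua_theory) :
  inhabited (left_adjoint Th) /\
  (forall L : left_adjoint Th, finitary L /\ based L).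
Proof.
split; first exact: inhabits (free_left_adjoint Th).
by move=> L; split; [exact: finitary_monad | exact: based_monad].
Qed.
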